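(* Let $\mathcal A$ be a commutative semiring, $n\ge2$, $V_n$ the free $\mathcal A$-module with basis $b_0,\dots,b_{n-1}$, $f\in\operatorname{End}_{\mathcal A}(V_n)$, $D(z)$ the Hasse–Schmidt derivation on $\bigwedge V_n$ associated with $f$ and $\overline D(z)$ its quasi-inverse on $\bigwedge^2V_n$. Then for all $u,v\in V_n$: $$D(z)\,\overline D(z)(u\wedge v)\succeq u\wedge v\qquad\text{and}\qquad \overline D(z)\,D(z)(u\wedge v)\succeq u\wedge v .$$
   Context: $\bigwedge V_n=\bigoplus_{r\ge0}\bigwedge^rV_n$ is the graded associative $\mathcal A$-semialgebra with product $\wedge$ such that $\bigwedge^0V_n=\mathcal A$, $\bigwedge^1V_n=V_n$, and for $r\ge2$, $\bigwedge^rV_n$ is the free $\mathcal A$-module with basis $\{b_I,b_I':|I|=r\}$, $b_I=b_{i_1}\wedge\cdots\wedge b_{i_r}$ for $I=\{i_1<\dots<i_r\}\subseteq\{0,\dots,n-1\}$. For $r\ge2$ the negation map $(-)$ is the $\mathcal A$-linear involution of $\bigwedge^rV_n$ exchanging $b_I,b_I'$, compatible with $\wedge$; $b_i\wedge b_i=\mathbb 0$ and $u\wedge w=(-)(w\wedge u)$ for $u,w\in V_n$. A quasi-zero is an element $x+(-)x$; $x\succeq y$ means $x=y+d$ with $d$ in the ideal generated by quasi-zeros and all $w\wedge w$ ($w\in V_n$), coefficientwise for power series in $z$. $D(z)=\sum_iD_iz^i$, $D_i\in\operatorname{End}_{\mathcal A}(\bigwedge V_n)$ degree-preserving, $D(z)(x\wedge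 y)=D(z)x\wedge D(z)y$, $D_iv=f^i(v)$ for $v\in V_n$ (so $D_1=f$ on $V_n$). On $\bigwedge^2V_n$, $\overline D(z)(x\wedge y)=x\wedge y+(f(y)\wedge x+y\wedge f(x))z+(f(x)\wedge f(y))z^2$ for $x,y\in V_n$, extended additively and coefficientwise to power series in $z$. *)

From HB Require Import structures.
From mathcomp Require Import all_boot all_order all_algebra.
Set Implicit Arguments. Unset Strict Implicit. Unset Printing Implicit Defensive.
Import GRing.Theory.
Local Open Scope ring_scope.

(* V_n : free A-module with basis b_0..b_{n-1}; v i = coefficient of b_i.    *)
Definition Vn (A : comPzSemiRingType) (n : nat) := {ffun 'I_n -> A}.

Definition vscale (A : comPzSemiRingType) n (a : A) (v : Vn A n) : Vn A n :=
  [ffun i => a * v i].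

Definition is_endo (A : comPzSemiRingType) n (f : Vn A n -> Vn A n) : Prop :=
  (forall v w : Vn A n, f (v + w) = f v + f w) /\
  (forall (a : A) (v : Vn A n), f (vscale a v) = vscale a (f v)).

Definition pairs2 (n : nat) := {p : 'I_n * 'I_n | (p.1 < p.2)%N}.

(* /\^2 V_n : free A-module with basis {b_I, b'_I : |I| = 2};
   x (I, false) = coefficient of b_I,  x (I, true) = coefficient of b'_I.   *)
Definition W2 (A : comPzSemiRingType) (n : nat) := {ffun (pairs2 n * bool) -> A}.

Definition wneg (A : comPzSemiRingType) n (x : W2 A n) : W2 A n :=
  [ffun k => x (k.1, ~~ k.2)].

Definition wscale (A : comPzSemiRingType) n (a : A) (x : W2 A n) : W2 A n :=
  [ffun k => a * x k].

(* the wedge product V_n x V_n -> /\^2 V_n: u /\ v = sum_{i,j} u_i v_j b_i/\b_j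
   with b_i/\b_i = 0, b_i/\b_j = b_I and b_j/\b_i = (-)b_I = b'_I for i<j.  *)
Definition wedge (A : comPzSemiRingType) n (u v : Vn A n) : W2 A n :=
  [ffun k => let i := (val k.1).1 in let j := (val k.1).2 in
             if k.2 then u j * v i else u i * v j].

(* degree-2 part of the ideal generated by the quasi-zeros x + (-)x and the
   squares w /\ w (w in V_n): A-linear combinations of such elements.        *)
Inductive qz_ideal2 (A : comPzSemiRingType) n : W2 A n -> Prop :=
| qzi0 : qz_ideal2 0
| qzi_qz : forall (a : A) (x : W2 A n), qz_ideal2 (wscale a (x + wneg x))
| qzi_sq : forall (a : A) (w : Vn A n), qz_ideal2 (wscale a (wedge w w))
| qzi_add : forall d1 d2, qz_ideal2 d1 -> qz_ideal2 d2 -> qz_ideal2 (d1 + d2).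

Definition wsucceq (A : comPzSemiRingType) n (x y : W2 A n) : Prop :=
  exists d, qz_ideal2 d /\ x = y + d.

(* power series in z with coefficients in /\^2 V_n: coefficient functions;
   >= is taken coefficientwise *)
Definition ser_succeq (A : comPzSemiRingType) n (X Y : nat -> W2 A n) : Prop :=
  forall k, wsucceq (X k) (Y k).

Definition ser_const (A : comPzSemiRingType) n (x : W2 A n) : nat -> W2 A n :=
  fun k => if k == 0%N then x else 0.

Section HS.
Variables (A : comPzSemiRingType) (n : nat) (f : Vn A n -> Vn A n).

(* D_i v = f^i v on V_n *)
Definition fpow (i : nat) (v : Vn A n) : Vn A n := iter i f v.

(* coefficient of z^k in D(z)(x /\ y) = D(z)x /\ D(z)y, x y in V_n *)
Definition Dwedge (x y : Vn A n) (k : nat) : W2 A n :=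
  \sum_(p < k.+1) wedge (fpow p x) (fpow (k - p) y).

(* the decomposable terms of the coefficient of z^j of Dbar(z)(x /\ y):
   Dbar(z)(x/\y) = x/\y + (f(y)/\x + y/\f(x)) z + (f(x)/\f(y)) z^2          *)
Definition Dbar_terms (x y : Vn A n) (j : nat) : seq (Vn A n * Vn A n) :=
  match j with
  | 0 => [:: (x, y)]
  | 1 => [:: (f y, x); (y, f x)]
  | 2 => [:: (f x, f y)]
  | _ => [::]
  end.

Definition Dbarwedge (x y : Vn A n) (j : nat) : W2 A n :=
  \sum_(t <- Dbar_terms x y j) wedge t.1 t.2.

(* coefficient of z^k of D(z) Dbar(z) (u /\ v): D(z) applied additively to
   the decomposable terms of Dbar(z)(u /\ v), coefficientwise in z *)
Definition D_Dbar (u v : Vn A n) (k : nat) : W2 A n :=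
  \sum_(j < k.+1) \sum_(t <- Dbar_terms u v j) Dwedge t.1 t.2 (k - j).

(* coefficient of z^k of Dbar(z) D(z) (u /\ v): Dbar(z) applied additively to
   the decomposable terms f^p u /\ f^q v of D(z)(u /\ v) *)
Definition Dbar_D (u v : Vn A n) (k : nat) : W2 A n :=
  \sum_(j < k.+1) \sum_(p < j.+1)
     Dbarwedge (fpow p u) (fpow (j - p) v) (k - j).

End HS.

(* Both compositions have the same coefficients, namely those of
   Dbar(z) applied formally to D(z)u /\ D(z)v:
     X /\ Y + z ((-)(X /\ fY) + (-)(fX /\ Y)) + z^2 fX /\ fY,
   with X = D(z)u, Y = D(z)v; this uses only that f commutes with D(z).
   Since D(z)x = x + z D(z)(fx), expanding D(z)u /\ D(z)v gives
     D(z)u /\ D(z)v + z^2 D(z)fu /\ D(z)fv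
       = u /\ v + z (D(z)u /\ D(z)fv + D(z)fu /\ D(z)v),
   so the series above is u /\ v plus z times a quasi-zero M + (-)M. *)

From mathcomp Require Import all_boot all_order all_algebra.
Set Implicit Arguments. Unset Strict Implicit. Unset Printing Implicit Defensive.
Import GRing.Theory.
Local Open Scope ring_scope.

Section SeriesShift.
Variable V : nmodType.

Definition ser_shift (X : nat -> V) (k : nat) : V :=
  if k is k'.+1 then X k' else 0.

Lemma eq_ser_shift (X Y : nat -> V) : X =1 Y -> ser_shift X =1 ser_shift Y.
Proof. by move=> eqXY [|k] //=; rewrite eqXY. Qed.

Lemma sum_convl_deg2 (G : nat -> nat -> V) (k : nat) :
    (forall j m, (2 < j)%N -> G j m = 0) ->
  \sum_(j < k.+1) G j (k - j)%N
    = G 0%N k + ser_shift (G 1%N) k + ser_shift (ser_shift (G 2%N)) k.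
Proof.
case: k => [|[|k]] G_gt2 /=.
- by rewrite big_ord1 !addr0.
- by rewrite !big_ord_recl big_ord0 !addr0.
rewrite !big_ord_recl big1 => [|j _]; last exact: G_gt2.
by rewrite addr0 !addrA !subSS !subn0.
Qed.

Lemma sum_convr_deg2 (H : nat -> nat -> V) (k : nat) :
    (forall j m, (2 < m)%N -> H j m = 0) ->
  \sum_(j < k.+1) H j (k - j)%N
    = H k 0%N + ser_shift (fun j => H j 1%N) k
      + ser_shift (ser_shift (fun j => H j 2%N)) k.
Proof.
move=> H_gt2; rewrite (reindex_inj rev_ord_inj) /=.
rewrite (eq_bigr (fun j : 'I_k.+1 => H (k - j)%N j)) => [|j _]; last first.
  by rewrite subSS subKn // -ltnS.
by rewrite (sum_convl_deg2 (G := fun j m => H m j)) ?subn0 // => j m; apply: H_gt2.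
Qed.

End SeriesShift.

Section Negation.
Variables (A : comPzSemiRingType) (n : nat).

Lemma wnegD (x y : W2 A n) : wneg (x + y) = wneg x + wneg y.
Proof. by apply/ffunP => k; rewrite !ffunE. Qed.

Lemma wneg0 : wneg (0 : W2 A n) = 0.
Proof. by apply/ffunP => k; rewrite !ffunE. Qed.

Lemma wneg_sum I (r : seq I) (F : I -> W2 A n) :
  wneg (\sum_(i <- r) F i) = \sum_(i <- r) wneg (F i).
Proof. exact: (big_morph _ wnegD wneg0). Qed.

Lemma wneg_wedge (x y : Vn A n) : wneg (wedge x y) = wedge y x.
Proof. by apply/ffunP => -[k []]; rewrite !ffunE //= mulrC. Qed.

Lemma qz_ideal2_quasi_zero (x : W2 A n) : qz_ideal2 (x + wneg x).
Proof.
have -> : x + wneg x = wscale 1 (x + wneg x).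
  by apply/ffunP => k; rewrite [RHS]ffunE mul1r.
exact: qzi_qz.
Qed.

End Negation.

Section HasseSchmidt.
Variables (A : comPzSemiRingType) (n : nat) (f : Vn A n -> Vn A n).

Lemma fpow_f (m : nat) (x : Vn A n) : fpow f m (f x) = f (fpow f m x).
Proof. by rewrite /fpow -iterSr. Qed.

Lemma Dwedge_recl (x y : Vn A n) (k : nat) :
  Dwedge f x y k = wedge x (fpow f k y) + ser_shift (Dwedge f (f x) y) k.
Proof.
rewrite /Dwedge big_ord_recl subn0; case: k => [|k] /=; first by rewrite big_ord0.
by congr (_ + _); apply: eq_bigr => i _; rewrite fpow_f.
Qed.

Lemma Dwedge_swap (x y : Vn A n) (k : nat) :
  Dwedge f y x k = wneg (Dwedge f x y k).
Proof.
rewrite /Dwedge wneg_sum (reindex_inj rev_ord_inj) /=.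
by apply: eq_bigr => i _; rewrite wneg_wedge subSS subKn // -ltnS.
Qed.

Definition Dwedge_mixed (u v : Vn A n) (k : nat) : W2 A n :=
  Dwedge f u (f v) k + Dwedge f (f u) v k.

Lemma Dwedge_expand (u v : Vn A n) (k : nat) :
  Dwedge f u v k + ser_shift (ser_shift (Dwedge f (f u) (f v))) k
    = ser_const (wedge u v) k + ser_shift (Dwedge_mixed u v) k.
Proof.
rewrite /ser_const; case: k => [|k] /=; first by rewrite Dwedge_recl !addr0.
rewrite add0r /Dwedge_mixed Dwedge_recl (Dwedge_recl u (f v)) fpow_f /=.
by rewrite addrAC addrC.
Qed.

Definition Dbar_Dwedge (u v : Vn A n) (k : nat) : W2 A n :=
  Dwedge f u v k + ser_shift (fun j => wneg (Dwedge_mixed u v j)) k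
  + ser_shift (ser_shift (Dwedge f (f u) (f v))) k.

Lemma Dbar_Dwedge_succeq (u v : Vn A n) :
  ser_succeq (Dbar_Dwedge u v) (ser_const (wedge u v)).
Proof.
move=> k; set M := ser_shift (Dwedge_mixed u v) k.
have shift_wneg : ser_shift (fun j => wneg (Dwedge_mixed u v j)) k = wneg M.
  by case: k @M => [|k] /=; rewrite ?wneg0.
exists (M + wneg M); split; first exact: qz_ideal2_quasi_zero.
by rewrite /Dbar_Dwedge shift_wneg addrAC Dwedge_expand addrA.
Qed.

Lemma D_Dbar_coef (u v : Vn A n) (k : nat) :
  D_Dbar f u v k = Dbar_Dwedge u v k.
Proof.
rewrite /D_Dbar (sum_convl_deg2
  (G := fun j m => \sum_(t <- Dbar_terms f u v j) Dwedge f t.1 t.2 m)); last first.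
  by move=> [|[|[|j]]] m // _; rewrite big_nil.
rewrite /Dbar_Dwedge /= big_cons big_nil addr0; congr (_ + _ + _).
- apply: eq_ser_shift => j; rewrite !big_cons big_nil addr0 /=.
  by rewrite (Dwedge_swap u) (Dwedge_swap (f u)) wnegD.
- apply: eq_ser_shift; apply: eq_ser_shift => m.
  by rewrite big_cons big_nil addr0.
Qed.

Lemma Dbar_D_coef (u v : Vn A n) (k : nat) :
  Dbar_D f u v k = Dbar_Dwedge u v k.
Proof.
rewrite /Dbar_D (sum_convr_deg2 (H := fun j m =>
  \sum_(p < j.+1) Dbarwedge f (fpow f p u) (fpow f (j - p) v) m)); last first.
  by move=> j [|[|[|m]]] // _; apply: big1 => p _; rewrite /Dbarwedge big_nil.
rewrite /Dbar_Dwedge /Dbarwedge /=; congr (_ + _ + _).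
- by apply: eq_bigr => p _; rewrite big_cons big_nil addr0.
- apply: eq_ser_shift => j; rewrite wnegD /Dwedge !wneg_sum -big_split /=.
  by apply: eq_bigr => p _; rewrite !big_cons big_nil addr0 !wneg_wedge !fpow_f.
- apply: eq_ser_shift; apply: eq_ser_shift => j; apply: eq_bigr => p _.
  by rewrite big_cons big_nil addr0 !fpow_f.
Qed.

End HasseSchmidt.

Theorem proposition3p4 (A : comPzSemiRingType) (n : nat) (hn : (2 <= n)%N)
  (f : Vn A n -> Vn A n) (hf : is_endo f) (u v : Vn A n) :
  ser_succeq (D_Dbar f u v) (ser_const (wedge u v)) /\
  ser_succeq (Dbar_D f u v) (ser_const (wedge u v)).
Proof.
split=> k; rewrite ?D_Dbar_coef ?Dbar_D_coef; exact: Dbar_Dwedge_succeq.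
Qed.
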